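(* Let $q$ be a prime power, $n$ a positive integer with $\gcd(q,n)=1$, $s\in\mathbb{Z}_n^*$, $t\in\mathbb{Z}_n$ with $qt\equiv t\pmod n$, $s^{-1}$ a positive integer with $ss^{-1}\equiv1\pmod n$, and $P\subseteq\mathbb{Z}_n$ a $\mu_q$-invariant subset. Then $$f_{\rho_{s,t}(P)}(X)=\gcd\big(f_P(\theta^{-t}X^{s^{-1}}),\,X^n-1\big)=\gcd\big(\varphi_{s,t}(f_P(X)),\,X^n-1\big),$$ where $\gcd$ denotes the monic greatest common divisor in $\mathbb{F}_q[X]$.
   Context: Fix a primitive $n$-th root of unity $\theta$ in an extension of $\mathbb{F}_q$. $\mu_q:\mathbb{Z}_n\to\mathbb{Z}_n$, $i\mapsto qi\bmod n$; $P$ is $\mu_q$-invariant if $\mu_q(P)=P$. For such $P$, $f_P(X)=\prod_{i\in P}(X-\theta^i)\in\mathbb{F}_q[X]$. $\rho_{s,t}:\mathbb{Z}_n\to\mathbb{Z}_n$, $i\mapsto s(i+t)\bmod n$. $\varphi_{s,t}(a(X))$ is the unique polynomial of degree $<n$ congruent to $a(\theta^{-t}X^{s^{-1}})$ modulo $X^n-1$ (note $\theta^{-t}\in\mathbb{F}_q$). *)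

From HB Require Import structures.
From mathcomp Require Import all_boot all_order all_algebra all_field.
Set Implicit Arguments. Unset Strict Implicit. Unset Printing Implicit Defensive.
Import GRing.Theory.
Local Open Scope ring_scope.

(* Z_n is represented by 'I_n (n > 0); arithmetic is done on nat mod n. *)

Definition mu (q n : nat) (P : {set 'I_n}) : {set 'I_n} :=
  [set j : 'I_n | [exists i in P, nat_of_ord j == (q * i) %% n]%N].

Definition mu_invariant (q n : nat) (P : {set 'I_n}) : bool := mu q P == P.

Definition rho (n s t : nat) (P : {set 'I_n}) : {set 'I_n} :=
  [set j : 'I_n | [exists i in P, nat_of_ord j == (s * (i + t)) %% n]%N].

Definition fP (L : fieldType) (n : nat) (theta : L) (P : {set 'I_n}) : {poly L} :=
  \prod_(i in P) ('X - (theta ^+ i)%:P).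

Definition mgcdp (L : fieldType) (p r : {poly L}) : {poly L} :=
  (lead_coef (gcdp p r))^-1 *: gcdp p r.

Definition subst_st (L : fieldType) (theta : L) (t s' : nat) (a : {poly L}) : {poly L} :=
  a \Po ((theta ^- t) *: 'X^s').

Definition phi_st (L : fieldType) (n : nat) (theta : L) (t s' : nat) (a : {poly L})
  : {poly L} := subst_st theta t s' a %% ('X^n - 1).

From HB Require Import structures.
From mathcomp Require Import all_boot all_order all_algebra all_field.
Set Implicit Arguments. Unset Strict Implicit. Unset Printing Implicit Defensive.
Import GRing.Theory.
Local Open Scope ring_scope.

(* Since theta is a primitive n-th root of unity, X^n - 1 is the product of
   the distinct linear factors X - theta^k, k < n, so the monic gcd of any
   polynomial p with X^n - 1 is the product of those factors whose root
   theta^k is a root of p.  Now theta^k is a root of f_P(theta^-t X^s') iff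
   theta^(k s' - t) = theta^i for some i in P, i.e. iff k = s (i + t) mod n,
   i.e. iff k lies in rho_{s,t}(P).  Reducing modulo X^n - 1 does not change
   the gcd with X^n - 1.  Only the primitivity of theta and s s' = 1 (mod n)
   are used; the remaining hypotheses only serve to put f_P and the gcds in
   F_q[X]. *)

Section MonicGcd.

Variable L : fieldType.
Implicit Types p q d : {poly L}.

Lemma mgcdp_eqp p q : mgcdp p q %= gcdp p q.
Proof.
rewrite /mgcdp; have [->|g0] := eqVneq (gcdp p q) 0; first by rewrite scaler0 eqpxx.
by rewrite eqp_scale // invr_eq0 lead_coef_eq0.
Qed.

Lemma monic_mgcdp p q : gcdp p q != 0 -> mgcdp p q \is monic.
Proof. by move=> g0; rewrite monicE lead_coefZ mulVf ?lead_coef_eq0. Qed.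

Lemma mgcdp_eqp_monic p q d : d \is monic -> gcdp p q %= d -> mgcdp p q = d.
Proof.
move=> d_monic gd.
have g0 : gcdp p q != 0.
  by apply: contraTneq gd => ->; rewrite eqp_sym eqp0 monic_neq0.
apply/eqP; rewrite -eqp_monic ?monic_mgcdp //.
exact: eqp_trans (mgcdp_eqp p q) gd.
Qed.

Lemma mgcdp_modl p q : q != 0 -> mgcdp (p %% q) q = mgcdp p q.
Proof.
move=> q0; have g0 : gcdp p q != 0 by rewrite gcdp_eq0 negb_and q0 orbT.
apply: mgcdp_eqp_monic; first exact: monic_mgcdp.
by apply: eqp_trans (gcdp_modl p q) _; rewrite eqp_sym mgcdp_eqp.
Qed.

Lemma gcdp_prod_XsubC p (rs : seq L) : uniq rs ->
  gcdp p (\prod_(z <- rs) ('X - z%:P)) %= \prod_(z <- rs | root p z) ('X - z%:P).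
Proof.
move=> rs_uniq; rewrite (bigID (root p)) /=.
have coprime_nonroots : coprimep p (\prod_(z <- rs | ~~ root p z) ('X - z%:P)).
  elim/big_rec: _ => [|z r nroot_z cop_r]; first exact: coprimep1.
  by rewrite coprimepMr cop_r coprimep_XsubC nroot_z.
have roots_dvd : \prod_(z <- rs | root p z) ('X - z%:P) %| p.
  rewrite -big_filter; apply: uniq_roots_dvdp; first exact: filter_all.
  by rewrite uniq_rootsE filter_uniq.
exact: eqp_trans (Gauss_gcdpl _ coprime_nonroots) (dvdp_gcd_idr roots_dvd).
Qed.

Lemma mgcdp_Xn_sub_1 (n : nat) (theta : L) p : n.-primitive_root theta ->
  mgcdp p ('X^n - 1) = \prod_(k < n | root p (theta ^+ k)) ('X - (theta ^+ k)%:P).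
Proof.
move=> prim.
rewrite -(big_mkord (fun i => root p (theta ^+ i)) (fun i => 'X - (theta ^+ i)%:P)).
rewrite -(factor_Xn_sub_1 prim).
rewrite -(big_map (fun i => theta ^+ i) xpredT (fun z => 'X - z%:P)).
rewrite -(big_map (fun i => theta ^+ i) (root p) (fun z => 'X - z%:P)).
apply: mgcdp_eqp_monic; first exact: monic_prod_XsubC.
apply: gcdp_prod_XsubC; rewrite map_inj_in_uniq ?iota_uniq // => i j.
rewrite !mem_iota !add0n !subn0 => /andP [_ lt_in] /andP [_ lt_jn] /eqP.
by rewrite (eq_prim_root_expr prim) !modn_small // => /eqP.
Qed.

End MonicGcd.

Lemma eqn_mod_mul_inv {n s s' k : nat} (m : nat) :
  (k < n)%N -> (s * s' = 1 %[mod n])%N -> (k * s' == m %[mod n])%N = (k == s * m %% n)%N.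
Proof.
move=> lt_kn ss'; apply/eqP/eqP => [km | ->].
- rewrite -(modn_small lt_kn) -[k in LHS]muln1 -modnMmr -ss' modnMmr mulnCA.
  by rewrite -modnMmr km modnMmr.
- by rewrite modnMml -mulnA mulnCA -modnMmr mulnC ss' modnMml mul1n.
Qed.

Section RootsOfSubstitutedFP.

Variables (L : fieldType) (n : nat) (theta : L).

Lemma root_fP (P : {set 'I_n}) x :
  root (fP theta P) x = [exists i in P, x == theta ^+ i].
Proof.
rewrite /fP -(big_image _ _ (fun i : 'I_n => theta ^+ i) _ (fun z => 'X - z%:P)).
rewrite root_prod_XsubC; apply/imageP/existsP => [[i iP ->] | [i /andP [iP /eqP ->]]].
  by exists i; rewrite iP /=.
by exists i.
Qed.

Lemma root_subst_st t s' a x :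
  root (subst_st theta t s' a) x = root a (theta ^- t * x ^+ s').
Proof. by rewrite /root /subst_st horner_comp hornerZ hornerXn. Qed.

Lemma root_subst_st_fP (s t : 'I_n) s' (P : {set 'I_n}) (k : 'I_n) :
  n.-primitive_root theta -> (s * s' = 1 %[mod n])%N ->
  root (subst_st theta t s' (fP theta P)) (theta ^+ k) = (k \in rho s t P).
Proof.
move=> prim ss'.
have theta_t_neq0 : theta ^+ t != 0.
  by rewrite expf_neq0 // (prim_root_eq0 prim) -lt0n (prim_order_gt0 prim).
rewrite root_subst_st root_fP inE; apply: eq_existsb => i; congr (_ && _).
rewrite -(inj_eq (mulfI theta_t_neq0)) mulVKf // -!exprM -exprD addnC.
by rewrite (eq_prim_root_expr prim) (eqn_mod_mul_inv _ (ltn_ord k) ss').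
Qed.

End RootsOfSubstitutedFP.

Theorem theorem2p8 (F : finFieldType) (L : fieldExtType F) (n : nat)
  (theta : L) (s t : 'I_n) (s' : nat) (P : {set 'I_n}) :
  (0 < n)%N ->
  coprime #|F| n ->
  n.-primitive_root theta ->
  coprime s n ->
  (#|F| * t = t %[mod n])%N ->
  (0 < s')%N ->
  (s * s' = 1 %[mod n])%N ->
  mu_invariant #|F| P ->
  fP theta (rho s t P) = mgcdp (subst_st theta t s' (fP theta P)) ('X^n - 1)
  /\ mgcdp (subst_st theta t s' (fP theta P)) ('X^n - 1)
     = mgcdp (phi_st n theta t s' (fP theta P)) ('X^n - 1).
Proof.
move=> n_gt0 _ prim _ _ _ ss' _; split.
  rewrite (mgcdp_Xn_sub_1 _ prim) /fP; apply: eq_bigl => k.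
  by rewrite (root_subst_st_fP _ _ _ prim ss').
by rewrite /phi_st mgcdp_modl // monic_neq0 // monicXnsubC.
Qed.
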